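(* Let $\Delta\ge 41$ be an integer and $k=\lceil 27\Delta\ln\Delta\rceil$. If $G$ is a graph with maximum degree $\Delta$ and $Y$ is an independent set of vertices in $G$, then the set $E_G(Y,V(G)\setminus Y)$ of edges with one end in $Y$ and the other in $V(G)\setminus Y$ can be partitioned into $k$ $G$-good sets.
   Context: All graphs are finite and simple; $\ln$ is the natural logarithm. A set $F$ of edges of $G$ is \emph{$G$-good} if no two distinct edges $e,f\in F$ satisfy either (i) $e$ and $f$ share no vertex and some edge of $G$ joins an endpoint of $e$ to an endpoint of $f$, or (ii) $e$ and $f$ lie in a common triangle of $G$. (A partition into $k$ sets may have some empty parts.) *)

From mathcomp Require Import all_boot.
From Stdlib Require Import Reals.
Set Implicit Arguments. Unset Strict Implicit. Unset Printing Implicit Defensive.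

Definition simple_graph (T : finType) (adj : rel T) : Prop :=
  symmetric adj /\ irreflexive adj.

Definition is_edge (T : finType) (adj : rel T) (f : {set T}) : bool :=
  [exists x, exists y, adj x y && (f == [set x; y])].

Definition degree (T : finType) (adj : rel T) (v : T) : nat :=
  #|[set u | adj v u]|.

Definition max_degree (T : finType) (adj : rel T) : nat :=
  \max_(v : T) degree adj v.

Definition independent (T : finType) (adj : rel T) (Y : {set T}) : Prop :=
  forall x y, x \in Y -> y \in Y -> ~~ adj x y.

Definition cut_edge (T : finType) (adj : rel T) (Y : {set T}) (f : {set T}) : Prop :=
  exists x y, [/\ adj x y, x \in Y, y \notin Y & f = [set x; y]].

Definition in_common_triangle (T : finType) (adj : rel T) (f g : {set T}) : Prop :=
  exists a b c, [/\ adj a b, adj b c, adj a c,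
    f \subset [set a; b; c] & g \subset [set a; b; c]].

Definition good (T : finType) (adj : rel T) (F : {set T} -> Prop) : Prop :=
  forall f g, F f -> F g -> is_edge adj f -> is_edge adj g -> f <> g ->
    ~ ( ([disjoint f & g] /\ exists x y, [/\ x \in f, y \in g & adj x y])
        \/ in_common_triangle adj f g ).

(* Colour the vertices independently in k rounds, each vertex
   receiving one of 2D colours per round; in round i the vertices outside Y of
   colour 0 form a layer Z_i.  A cut edge yx (y in Y) is captured in round i if
   x is the only vertex of Z_i in N(y) u N(x).  The edges captured in one round
   form a G-good set: since Y is independent, an edge joining two such edges, or
   a triangle containing both, would put the outer end of one of them into the
   neighbourhood of the other.  A round captures yx with probability at least
   (1/2D)(1 - 1/2D)^(2D-1) >= 1/(6D), so yx is missed by all rounds with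
   probability at most exp(-k/(6D)) <= D^-4.  That event is determined by the
   colours on N(y) u N(x), hence is independent of all but 4D^3 of the others,
   and the Lovasz Local Lemma (4 p d <= 1) gives a sample capturing every cut
   edge; colour each edge by a round capturing it. *)

From Stdlib Require Import Reals Lra.
From mathcomp Require Import all_boot zify.
Set Implicit Arguments. Unset Strict Implicit. Unset Printing Implicit Defensive.

(* all_boot rebinds the delimiting key R to ring_scope; restore it for the reals. *)
Delimit Scope R_scope with R.

Section RealEstimates.
Local Open Scope R_scope.

Lemma exp_pow (x : R) (n : nat) : exp x ^ n = exp (INR n * x).
Proof. by rewrite -Rpower_pow; [rewrite /Rpower ln_exp | exact: exp_pos]. Qed.

Lemma pow_succ_le_3_pow (m : nat) : INR m.+1 ^ m <= 3 * INR m ^ m.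
Proof.
case: m => [|m]; first by rewrite /=; lra.
have m_gt0 : 0 < INR m.+1 by apply: lt_0_INR; lia.
have -> : INR m.+2 = INR m.+1 * (1 + / INR m.+1) by rewrite S_INR; field; lra.
rewrite Rpow_mult_distr [3 * _]Rmult_comm.
apply: Rmult_le_compat_l; first by apply: pow_le; lra.
have inv_ge0 : 0 <= 1 + / INR m.+1 by have := Rinv_0_lt_compat _ m_gt0; lra.
apply: Rle_trans (pow_incr _ _ _ (conj inv_ge0 (exp_ineq1_le _))) _.
by rewrite exp_pow Rinv_r; [exact: exp_le_3 | lra].
Qed.

Lemma pow_one_sub_tail_le (D q : R) (k : nat) : 1 <= D ->
  27 * D * ln D <= INR k -> 1 / (6 * D) <= q <= 1 -> (1 - q) ^ k * D ^ 4 <= 1.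
Proof.
move=> D_ge1 hk [q_lb q_ub].
have ln_ge0 : 0 <= ln D.
  case: (Rle_lt_or_eq_dec 1 D D_ge1) => [D_gt1 | <-]; last by rewrite ln_1; lra.
  by rewrite -ln_1; apply: Rlt_le; apply: ln_increasing; lra.
have kq : 4 * ln D <= INR k * q.
  have : 27 * D * ln D * (1 / (6 * D)) <= INR k * q.
    apply: Rmult_le_compat => //; first by apply: Rmult_le_pos; lra.
    by apply: Rlt_le; apply: Rdiv_lt_0_compat; lra.
  have -> : 27 * D * ln D * (1 / (6 * D)) = 9 / 2 * ln D by field; lra.
  lra.
have decay : (1 - q) ^ k <= exp (- (4 * ln D)).
  apply: Rle_trans (pow_incr _ _ _ (conj _ (exp_ineq1_le (- q)))) _; first lra.
  rewrite exp_pow; case: (Req_dec (INR k * - q) (- (4 * ln D))) => [-> | ne]; first lra.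
  by apply: Rlt_le; apply: exp_increasing; lra.
have D4_gt0 : 0 < D ^ 4 by apply: pow_lt; lra.
have D4_inv : exp (- (4 * ln D)) = / D ^ 4.
  have -> : 4 * ln D = ln (D ^ 4) by rewrite ln_pow /=; lra.
  by rewrite exp_Ropp exp_ln.
rewrite D4_inv in decay.
have := Rmult_le_compat_r (D ^ 4) _ _ (Rlt_le _ _ D4_gt0) decay.
by rewrite Rinv_l //; lra.
Qed.

End RealEstimates.

Lemma INR_expn (m n : nat) : INR (m ^ n) = (INR m ^ n)%R.
Proof. by elim: n => [|n IH] //; rewrite expnS mult_INR IH. Qed.

Lemma expSn_le_3_expn (m : nat) : m.+1 ^ m <= 3 * m ^ m.
Proof.
apply/leP; apply: INR_le; rewrite mult_INR !INR_expn.
have -> : INR 3 = 3%R by rewrite /=; lra.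
exact: pow_succ_le_3_pow.
Qed.

Lemma expSn_le_3_expn_le (a m : nat) : a <= m -> m.+1 ^ a <= 3 * m ^ a.
Proof.
case: m => [|m]; first by rewrite leqn0 => /eqP ->.
move/subnKC=> m_eq; set b := m.+1 - a in m_eq.
have le_b : m.+1 ^ b <= m.+2 ^ b by case: b {m_eq} => // b; rewrite leq_exp2r.
have le_m : m.+2 ^ a * m.+2 ^ b <= 3 * m.+1 ^ a * m.+1 ^ b.
  by rewrite -mulnA -!expnD m_eq; exact: expSn_le_3_expn.
rewrite -(@leq_pmul2r (m.+1 ^ b)) ?expn_gt0 //.
exact: leq_trans (leq_mul (leqnn _) le_b) le_m.
Qed.

Lemma expn_sub_tail_le (D k N c : nat) : 0 < D ->
  (27 * INR D * ln (INR D) <= INR k)%R ->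
  0 < N -> c <= N -> N <= 6 * D * c -> (N - c) ^ k * D ^ 4 <= N ^ k.
Proof.
move=> D_gt0 hk N_gt0 le_cN le_Nc.
have D_ge1 : (1 <= INR D)%R by apply: (le_INR 1); apply/leP.
have N_gt0R : (0 < INR N)%R by apply: lt_0_INR; apply/ltP.
have le_NcR : (INR N <= 6 * INR D * INR c)%R.
  have := le_INR _ _ (elimT leP le_Nc); rewrite !mult_INR.
  by have -> : INR 6 = 6%R by rewrite /=; lra.
have le_cNR : (INR c <= INR N)%R by apply: le_INR; apply/leP.
set q := (INR c / INR N)%R.
have hq : (1 / (6 * INR D) <= q)%R.
  apply: (Rmult_le_reg_r (6 * INR D * INR N)); first by apply: Rmult_lt_0_compat; lra.
  have -> : (1 / (6 * INR D) * (6 * INR D * INR N) = INR N)%R by field; lra.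
  by have -> : (q * (6 * INR D * INR N) = 6 * INR D * INR c)%R by rewrite /q; field; lra.
have q_le1 : (q <= 1)%R.
  apply: (Rmult_le_reg_r (INR N)) => //.
  have -> : (q * INR N = INR c)%R by rewrite /q; field; lra.
  lra.
have le_1 := pow_one_sub_tail_le D_ge1 hk (conj hq q_le1).
apply/leP; apply: INR_le; rewrite mult_INR !INR_expn minus_INR; last exact/leP.
have -> : (INR N - INR c = INR N * (1 - q))%R by rewrite /q; field; lra.
rewrite Rpow_mult_distr Rmult_assoc.
have := Rmult_le_compat_l _ _ _ (pow_le _ k (Rlt_le _ _ N_gt0R)) le_1.
by rewrite Rmult_1_r.
Qed.

Lemma card_bigcup_le (I T : finType) (P : {pred I}) (F : I -> {set T}) :
  #|\bigcup_(i in P) F i| <= \sum_(i in P) #|F i|.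
Proof.
elim/big_rec2: _ => [|i A n _ IH]; first by rewrite cards0.
exact: leq_trans (leq_card_setU _ _) (leq_add (leqnn _) IH).
Qed.

Section Independence.
Variables V W : finType.

Definition depends_on (U : {set V}) (A : pred {ffun V -> W}) :=
  forall s1 s2 : {ffun V -> W}, {in U, s1 =1 s2} -> A s1 = A s2.

Definition splice (U : {set V}) (s r : {ffun V -> W}) : {ffun V -> W} :=
  [ffun v => if v \in U then r v else s v].

(* Swapping the U-coordinates of two samples maps pairs in (A :&: B) x {ffun V -> W}
   bijectively onto pairs in B x A. *)
Lemma card_indep (U : {set V}) (A B : pred {ffun V -> W}) :
  depends_on U A -> depends_on (~: U) B ->
  #|[set s | A s && B s]| * #|{ffun V -> W}| = #|A| * #|B|.
Proof.
move=> A_U B_U.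
pose swap (p : {ffun V -> W} * {ffun V -> W}) := (splice U p.1 p.2, splice U p.2 p.1).
have swapK : involutive swap.
  by case=> s r; congr pair; apply/ffunP => v; rewrite !ffunE; case: (v \in U).
rewrite -cardsT -cardsX mulnC -[#|A|]cardsE -[#|B|]cardsE -cardsX.
rewrite -(card_preimset _ (inv_inj swapK)); apply: eq_card => -[s r].
rewrite !inE /= andbT.
have -> : A (splice U s r) = A r by apply: A_U => v vU; rewrite ffunE vU.
have -> : B (splice U s r) = B s by apply: B_U => v; rewrite inE ffunE => /negbTE ->.
by rewrite andbC.
Qed.

End Independence.

Section LovaszLocalLemma.
Variables (V W J : finType) (w0 : W).
Variables (U : J -> {set V}) (A : J -> pred {ffun V -> W}) (a b d : nat).

Definition neighbours j := [set i | [exists v, (v \in U j) && (v \in U i)]].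

Hypothesis A_local : forall j, depends_on (U j) (A j).
Hypothesis A_rare : forall j, #|A j| * b <= a * #|{ffun V -> W}|.
Hypothesis neighbours_few : forall j, #|neighbours j| <= d.
Hypothesis b_gt0 : 0 < b.
Hypothesis d_gt0 : 0 < d.
Hypothesis abd : 4 * a * d <= b.

Implicit Types (S : {set J}) (s : {ffun V -> W}).

Definition avoiding S := [set s | [forall i in S, ~~ A i s]].
Definition hitting j S := [set s | A j s && [forall i in S, ~~ A i s]].

Lemma avoidingS S1 S2 : S1 \subset S2 -> avoiding S2 \subset avoiding S1.
Proof.
move=> sub12; apply/subsetP => s; rewrite !inE => /forall_inP avoid2.
by apply/forall_inP => i /(subsetP sub12); apply: avoid2.
Qed.

Lemma hittingS j S1 S2 : S1 \subset S2 -> hitting j S2 \subset hitting j S1.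
Proof.
move=> sub12; apply/subsetP => s; rewrite !inE => /andP[-> avoid2].
by have := subsetP (avoidingS sub12) s; rewrite !inE; apply.
Qed.

Lemma card_hitting_far j S : [disjoint S & neighbours j] ->
  #|hitting j S| * b <= a * #|avoiding S|.
Proof.
move=> far.
have far_local : depends_on (~: U j) [pred s | [forall i in S, ~~ A i s]].
  move=> s1 s2 eq12; apply: eq_forallb_in => i iS; congr negb; apply: A_local => v vi.
  apply: eq12; rewrite inE; apply: contraFN (disjointFr far iS) => vj.
  by rewrite inE; apply/existsP; exists v; rewrite vj vi.
have := card_indep (@A_local j) far_local; rewrite -/(hitting j S).
have -> : #|[pred s | [forall i in S, ~~ A i s]]| = #|avoiding S|.
  by apply: eq_card => s; rewrite !inE.
have Omega_gt0 : 0 < #|{ffun V -> W}| by apply/card_gt0P; exists [ffun=> w0].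
move=> indep; rewrite -(leq_pmul2r Omega_gt0) mulnAC indep mulnAC.
by rewrite [a * _ * _]mulnAC leq_mul2r A_rare orbT.
Qed.

Lemma avoiding_cover j S :
  avoiding (S :\: neighbours j) \subset
  avoiding S :|: \bigcup_(i in S :&: neighbours j) hitting i (S :\: neighbours j).
Proof.
apply/subsetP => s s_far; rewrite inE; case s_near: (s \in avoiding S) => //=.
move/negbT: s_near; rewrite inE negb_forall_in => /exists_inP[i iS /negPn Ai].
have i_near : i \in neighbours j.
  apply: contraLR s_far => i_far; rewrite inE negb_forall_in.
  by apply/exists_inP; exists i; rewrite ?negbK // in_setD i_far.
apply/bigcupP; exists i; first by rewrite inE iS.
by move: s_far; rewrite !inE Ai.
Qed.

Lemma card_avoiding_far j S :
  (forall i, i \in S :&: neighbours j ->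
     #|hitting i (S :\: neighbours j)| * b <= 2 * a * #|avoiding (S :\: neighbours j)|) ->
  #|avoiding (S :\: neighbours j)| <= 2 * #|avoiding S|.
Proof.
move=> near_bound; set X := #|avoiding _|.
set Z := \sum_(i in S :&: neighbours j) #|hitting i (S :\: neighbours j)|.
have cover : X <= #|avoiding S| + Z.
  apply: leq_trans (subset_leq_card (avoiding_cover j S)) _.
  exact: leq_trans (leq_card_setU _ _) (leq_add (leqnn _) (card_bigcup_le _ _)).
have near_few : #|S :&: neighbours j| <= d.
  exact: leq_trans (subset_leq_card (subsetIr _ _)) (neighbours_few j).
have Zb : Z * b <= d * (2 * a * X).
  rewrite big_distrl /=.
  apply: (@leq_trans (\sum_(i in S :&: neighbours j) 2 * a * X)); first exact: leq_sum.
  by rewrite sum_nat_const leq_mul2r near_few orbT.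
rewrite -(leq_pmul2r b_gt0); nia.
Qed.

Lemma card_hitting_step j S :
  (forall i, i \in S :&: neighbours j ->
     #|hitting i (S :\: neighbours j)| * b <= 2 * a * #|avoiding (S :\: neighbours j)|) ->
  #|hitting j S| * b <= 2 * a * #|avoiding S|.
Proof.
move=> near_bound.
have far : [disjoint S :\: neighbours j & neighbours j].
  by rewrite disjoints_subset setDE subsetIr.
have hit_far := card_hitting_far far.
have avoid_far := card_avoiding_far near_bound.
have hit_le := subset_leq_card (hittingS j (subsetDl S (neighbours j))).
apply: leq_trans (leq_mul hit_le (leqnn b)) _; apply: leq_trans hit_far _.
by rewrite [2 * a]mulnC -mulnA leq_mul2l avoid_far orbT.
Qed.

(* The counting form of P(A_j | no A_i, i in S) <= 2p, by induction on #|S|. *)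
Lemma card_hitting_le j S : #|hitting j S| * b <= 2 * a * #|avoiding S|.
Proof.
move: (leqnn #|S|); move: {2}#|S| => n; elim: n S j => [|n IH] S j le_Sn;
  apply: card_hitting_step => i; rewrite inE => /andP[iS i_near].
  by move: le_Sn; rewrite leqn0 cards_eq0 => /eqP S0; rewrite S0 inE in iS.
apply: IH; rewrite -ltnS; apply: leq_trans le_Sn; apply: proper_card.
rewrite properE subsetDl /=; apply/subsetPn; exists i => //.
by rewrite in_setD i_near.
Qed.

Lemma card_avoiding_setD1 j S : j \in S ->
  #|avoiding (S :\ j)| = #|avoiding S| + #|hitting j (S :\ j)|.
Proof.
move=> jS; rewrite -(cardsID [set s | A j s] (avoiding (S :\ j))) addnC.
congr (_ + _); apply: eq_card => s; rewrite !inE.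
  apply/andP/forall_inP => [[Aj /forall_inP avoid] i iS | avoid].
    by case: (i =P j) => [-> // | /eqP ij]; apply: avoid; rewrite in_setD1 ij.
  split; first exact: avoid.
  by apply/forall_inP => i /setD1P[_]; apply: avoid.
by rewrite andbC.
Qed.

Lemma avoiding_gt0 S : 0 < #|avoiding S|.
Proof.
move: {2}#|S| (erefl #|S|) => n; elim: n S => [|n IH] S S_n.
  have -> : avoiding S = setT.
    by apply/setP => s; rewrite (cards0_eq S_n) !inE; apply/forall_inP => i; rewrite inE.
  by rewrite cardsT; apply/card_gt0P; exists [ffun=> w0].
have [j jS] : exists j, j \in S by apply/set0Pn; rewrite -card_gt0 S_n.
have avoid_gt0 : 0 < #|avoiding (S :\ j)|.
  by apply: IH; move: S_n; rewrite (cardsD1 j) jS => -[].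
have hit_le := card_hitting_le j (S :\ j).
have ab : 2 * a < b by nia.
rewrite lt0n; apply/eqP => avoid0.
move: hit_le; rewrite -[#|hitting j _|]add0n -{1}avoid0 -card_avoiding_setD1 //.
by rewrite mulnC leq_pmul2r // leqNgt ab.
Qed.

Theorem lovasz_local_lemma : exists s, forall j, ~~ A j s.
Proof.
have /card_gt0P[s] := avoiding_gt0 setT; rewrite inE => /forall_inP avoid.
by exists s => j; apply: avoid; rewrite inE.
Qed.

End LovaszLocalLemma.

Section Slices.
Variables (A B C : finType).

Lemma card_ffun_slices (P : {set {ffun A -> C}}) :
  #|[set s : {ffun A * B -> C} | [forall b, [ffun a => s (a, b)] \in P]]| = #|P| ^ #|B|.
Proof.
pose curry (s : {ffun A * B -> C}) := [ffun b => [ffun a => s (a, b)]].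
pose uncurry (t : {ffun B -> {ffun A -> C}}) := [ffun p : A * B => t p.2 p.1].
have curry_bij : bijective curry.
  exists uncurry => [s | t]; apply/ffunP; first by case=> a b; rewrite !ffunE.
  by move=> b; apply/ffunP => a; rewrite !ffunE.
rewrite -card_ffun_on -(on_card_preimset (onW_bij _ curry_bij)).
apply: eq_card => s; rewrite !inE; apply/forallP/ffun_onP => slices b.
  by rewrite ffunE; exact: slices.
by have := slices b; rewrite ffunE.
Qed.

End Slices.

Section Isolating.
Variables (T : finType) (m : nat).

Definition isolating (x : T) (R : {set T}) : {set {ffun T -> 'I_m.+1}} :=
  [set t : {ffun T -> 'I_m.+1} | (t x == ord0) && [forall v in R, t v != ord0]].

Lemma card_isolating (x : T) (R : {set T}) : x \notin R ->
  #|isolating x R| = m ^ #|R| * m.+1 ^ (#|T| - #|R|.+1).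
Proof.
move=> xR.
pose F v : pred 'I_m.+1 :=
  if v == x then pred1 ord0 else if v \in R then predC1 ord0 else predT.
have -> : #|isolating x R| = #|family F|.
  apply: eq_card => t; rewrite inE; apply/andP/familyP => [[/eqP tx /forall_inP tR] v | tF].
    rewrite /F; case: eqP => [-> | _]; first by rewrite inE tx.
    by case: ifP => vR; rewrite inE // tR.
  split; first by have := tF x; rewrite /F eqxx inE.
  apply/forall_inP => v vR; have := tF v; rewrite /F vR.
  by case: eqP => [ex | _]; [rewrite -ex vR in xR | rewrite inE].
rewrite card_family foldrE big_map big_enum /= (bigD1 x) //= /F eqxx card1 mul1n.
rewrite (bigID (mem R)) /=.
rewrite (eq_bigr (fun=> m)); last first.
  by move=> v /andP[/eqP vx vR]; case: eqP => // _; rewrite vR cardC1 card_ord.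
rewrite [X in _ * X](eq_bigr (fun=> m.+1)); last first.
  by move=> v /andP[/eqP vx vR]; case: eqP => // _; rewrite (negbTE vR) card_ord.
have prod_const (P : pred T) c : \prod_(v | P v) c = c ^ #|P| by rewrite -prod_nat_const.
rewrite !prod_const -(cardsC (x |: R)) cardsU1 xR addKn.
congr (_ ^ _ * _ ^ _); apply: eq_card => v; rewrite [in LHS]unfold_in ?inE.
  by case: eqP => // ->; rewrite (negbTE xR).
by rewrite negb_or.
Qed.

Lemma card_isolating_lb (x : T) (R : {set T}) : x \notin R -> #|R| <= m ->
  m.+1 ^ #|T| <= 3 * m.+1 * #|isolating x R|.
Proof.
move=> xR le_Rm; rewrite card_isolating //.
have le_RT : #|R|.+1 <= #|T| by have := max_card (x |: R); rewrite cardsU1 xR.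
rewrite -{1}(subnKC le_RT) expnD expnS mulnA [3 * _]mulnC -!mulnA.
by rewrite leq_pmul2l // mulnA leq_mul2r expSn_le_3_expn_le // orbT.
Qed.

End Isolating.

Lemma good_sub (T : finType) (adj : rel T) (F G : {set T} -> Prop) :
  (forall f, F f -> G f) -> good adj G -> good adj F.
Proof. by move=> FG goodG f g Ff Fg; apply: goodG; apply: FG. Qed.

Section CutEdges.
Variables (T : finType) (adj : rel T) (Y : {set T}).
Hypothesis adj_sym : symmetric adj.
Hypothesis Y_indep : independent adj Y.

Definition nbhd v := [set u | adj v u].
Definition edge_nbhd y x := nbhd y :|: nbhd x.
Definition cutb y x := [&& adj y x, y \in Y & x \notin Y].

Lemma triangle_adj a b c u v : adj a b -> adj b c -> adj a c ->
  u \in [set a; b; c] -> v \in [set a; b; c] -> u != v -> adj u v.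
Proof.
move=> ab bc ac; rewrite !inE => /orP[/orP[]|] /eqP-> /orP[/orP[]|] /eqP->;
  by rewrite ?eqxx // => _; rewrite adj_sym.
Qed.

Variable D : nat.
Hypothesis nbhd_le : forall v, #|nbhd v| <= D.

Lemma card_edge_nbhd y x : #|edge_nbhd y x| <= 2 * D.
Proof. by apply: leq_trans (leq_card_setU _ _) _; rewrite mul2n -addnn leq_add. Qed.

Lemma card_paths_le (W0 : {set T}) :
  #|[set p : T * T | [exists w in W0, adj w p.1] && adj p.1 p.2]| <= #|W0| * D * D.
Proof.
have sub : [set p : T * T | [exists w in W0, adj w p.1] && adj p.1 p.2] \subset
    \bigcup_(w in W0) \bigcup_(u in nbhd w) [set (u, z) | z in nbhd u].
  apply/subsetP => -[u z]; rewrite inE /= => /andP[/exists_inP[w wW wu] uz].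
  apply/bigcupP; exists w => //; apply/bigcupP; exists u; rewrite ?inE //.
  by apply/imsetP; exists z; rewrite ?inE.
apply: leq_trans (subset_leq_card sub) _; apply: leq_trans (card_bigcup_le _ _) _.
rewrite -mulnA -sum_nat_const; apply: leq_sum => w _.
apply: leq_trans (card_bigcup_le _ _) _.
apply: (@leq_trans (\sum_(u in nbhd w) D)).
  by apply: leq_sum => u _; apply: leq_trans (leq_imset_card _ _) (nbhd_le u).
by rewrite sum_nat_const leq_mul2r nbhd_le orbT.
Qed.

Section Layers.
Variables k m : nat.
Local Notation sample := {ffun T * 'I_k -> 'I_m.+1}.

Definition layer (s : sample) i := [set v | (v \notin Y) && (s (v, i) == ord0)].
Definition captured (s : sample) i y x := layer s i :&: edge_nbhd y x == [set x].
Definition captured_class (s : sample) i f :=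
  exists y x, [/\ f = [set y; x], cutb y x & captured s i y x].

Lemma captured_layer s i y x : captured s i y x -> x \in layer s i.
Proof. by move/eqP=> cap; have := set11 x; rewrite -cap => /setIP[]. Qed.

Lemma captured_uniq s i y x v : captured s i y x ->
  v \in layer s i -> v \in edge_nbhd y x -> v = x.
Proof. by move/eqP=> cap vZ vN; apply/set1P; rewrite -cap inE vZ vN. Qed.

Lemma captured_class_good s i : good adj (captured_class s i).
Proof.
move=> _ _ [y1 [x1 [-> /and3P[a1 Y1 _] c1]]] [y2 [x2 [-> /and3P[a2 Y2 _] c2]]] _ _ neq.
have outer_uniq y x y' x' :
    captured s i y x -> captured s i y' x' -> adj y x' || adj x x' -> x' = x.
  move=> c c' adj_x'; apply: captured_uniq c (captured_layer c') _.
  by rewrite !inE.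
case=> [[disj [u [v [u1 v2 uv]]]] | [a [b [c [ab bc ac sub1 sub2]]]]].
  have x12 : x1 = x2.
    move: u1 v2 uv; rewrite !inE => /orP[]/eqP-> /orP[]/eqP-> uv.
    - by move: (Y_indep Y1 Y2); rewrite uv.
    - by apply/esym/(outer_uniq _ _ _ _ c1 c2); rewrite uv.
    - by apply: (outer_uniq _ _ _ _ c2 c1); rewrite adj_sym uv.
    - by apply/esym/(outer_uniq _ _ _ _ c1 c2); rewrite uv orbT.
  by have := disjointFr disj (set22 y1 x1); rewrite x12 set22.
have [y1T x1T] : y1 \in [set a; b; c] /\ x1 \in [set a; b; c].
  by split; apply: (subsetP sub1); rewrite !inE eqxx ?orbT.
have [y2T x2T] : y2 \in [set a; b; c] /\ x2 \in [set a; b; c].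
  by split; apply: (subsetP sub2); rewrite !inE eqxx ?orbT.
have y12 : y1 = y2.
  by apply: contraNeq (Y_indep Y1 Y2) => ne; apply: (triangle_adj ab bc ac).
have x12 : x1 = x2.
  case: (eqVneq x1 x2) => // ne; apply: esym; apply: (outer_uniq _ _ _ _ c1 c2).
  by apply/orP; right; apply: (triangle_adj ab bc ac).
by apply: neq; rewrite y12 x12.
Qed.

Definition event_support (p : T * T) : {set T * 'I_k} :=
  if cutb p.1 p.2 then [set q | q.1 \in edge_nbhd p.1 p.2] else set0.
Definition uncaptured (p : T * T) : pred sample :=
  [pred s | cutb p.1 p.2 && [forall i, ~~ captured s i p.1 p.2]].

Lemma uncaptured_local p : depends_on (event_support p) (uncaptured p).
Proof.
case: p => y x s1 s2 eq12; rewrite /uncaptured /=; case cut: (cutb y x) => //=.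
apply: eq_forallb => i; congr (~~ (_ == _)); apply/setP => v; rewrite !in_setI.
case vN: (v \in edge_nbhd y x); rewrite ?andbF // !inE eq12 //.
by rewrite /event_support /= cut inE vN.
Qed.

Lemma captured_isolating s i y x : cutb y x ->
  captured s i y x = ([ffun v => s (v, i)] \in isolating m x (edge_nbhd y x :\ x :\: Y)).
Proof.
case/and3P=> yx _ xY; rewrite inE ffunE; apply/idP/andP => [cap | [sx0 /forall_inP R_nz]].
  have := captured_layer cap; rewrite inE => /andP[_ sx0]; split => //.
  apply/forall_inP => v; rewrite in_setD in_setD1 ffunE => /and3P[vY vx vN].
  apply: contra vx => sv0; apply/eqP; apply: (captured_uniq cap _ vN).
  by rewrite inE vY sv0.
apply/eqP/setP => v; rewrite in_setI in_set1 inE.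
case: (eqVneq v x) => [-> | vx]; first by rewrite xY sx0 !inE yx.
apply/negP => /andP[/andP[vY sv0] vN].
by have := R_nz v; rewrite in_setD in_setD1 vY vx vN ffunE sv0 => /(_ isT).
Qed.

Lemma card_uncaptured y x : cutb y x ->
  #|uncaptured (y, x)| = (m.+1 ^ #|T| - #|isolating m x (edge_nbhd y x :\ x :\: Y)|) ^ k.
Proof.
move=> cut; set iso := isolating _ _ _.
have -> : m.+1 ^ #|T| - #|iso| = #|~: iso|.
  by have := cardsC iso; rewrite card_ffun card_ord => <-; rewrite addKn.
rewrite -[k in _ ^ k]card_ord -card_ffun_slices; apply: eq_card => s.
rewrite /uncaptured !inE /= cut /=; apply: eq_forallb => i.
by rewrite captured_isolating // in_setC.
Qed.

Lemma card_uncaptured_le p : m.+1 = 2 * D -> (27 * INR D * ln (INR D) <= INR k)%R ->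
  #|uncaptured p| * D ^ 4 <= 1 * #|{ffun T * 'I_k -> 'I_m.+1}|.
Proof.
case: p => y x colours hk; case cut: (cutb y x); last first.
  by rewrite (eq_card0 (A := uncaptured _)) // => s; rewrite /uncaptured inE /= cut.
have D_gt0 : 0 < D by rewrite -(ltn_pmul2l (isT : 0 < 2)) -colours.
set R := edge_nbhd y x :\ x :\: Y.
have xR : x \notin R by rewrite !inE eqxx andbF.
have le_Rm : #|R| <= m.
  have xN : x \in edge_nbhd y x by case/and3P: cut => yx _ _; rewrite !inE yx.
  have := card_edge_nbhd y x; rewrite -colours (cardsD1 x) xN ltnS.
  by apply: leq_trans; apply: subset_leq_card; apply: subsetDl.
rewrite card_uncaptured // mul1n card_ffun card_prod !card_ord expnM.
apply: expn_sub_tail_le => //; first by rewrite expn_gt0.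
  by apply: leq_trans (max_card _) _; rewrite card_ffun card_ord.
have -> : 6 * D = 3 * m.+1 by rewrite colours mulnA.
exact: card_isolating_lb.
Qed.

Lemma card_neighbours_le p : #|neighbours event_support p| <= 4 * D ^ 3.
Proof.
case: p => y x; case cut: (cutb y x); last first.
  rewrite (eq_card0 (A := neighbours _ _)) // => p; rewrite inE.
  by apply/existsP => -[q]; rewrite /event_support /= cut inE.
set P := [set p : T * T | [exists w in edge_nbhd y x, adj w p.1] && adj p.1 p.2].
have swap_inj : injective (fun p : T * T => (p.2, p.1)) by apply: inv_inj => -[].
have sub : neighbours event_support (y, x) \subset P :|: (fun p => (p.2, p.1)) @^-1: P.
  apply/subsetP => -[y' x']; rewrite inE => /existsP[[w i]].
  rewrite /event_support /= cut; case cut': (cutb y' x'); last by rewrite in_set0 andbF.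
  case/and3P: cut' => a' _ _; rewrite !inE /= => /andP[wN].
  case/orP => adj_w; apply/orP; [left | right]; rewrite 1?(adj_sym x') a' andbT;
    by apply/exists_inP; exists w; rewrite 1?adj_sym // !inE.
apply: leq_trans (subset_leq_card sub) _; apply: leq_trans (leq_card_setU _ _) _.
rewrite card_preimset // addnn -mul2n.
have P_le : #|P| <= 2 * D * D * D.
  apply: leq_trans (card_paths_le _) _.
  by rewrite !leq_mul2r card_edge_nbhd !orbT.
by rewrite (expnS D 2) (expnS D 1) expn1; nia.
Qed.

Lemma exists_capturing_sample : 16 <= D -> m.+1 = 2 * D ->
  (27 * INR D * ln (INR D) <= INR k)%R ->
  exists s : sample, forall y x, cutb y x -> exists i, captured s i y x.
Proof.
move=> D_ge16 colours hk.
have D_gt0 : 0 < D by apply: leq_trans D_ge16.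
have b_gt0 : 0 < D ^ 4 by rewrite expn_gt0 D_gt0.
have d_gt0 : 0 < 4 * D ^ 3 by rewrite muln_gt0 expn_gt0 D_gt0.
have abd : 4 * 1 * (4 * D ^ 3) <= D ^ 4.
  by rewrite muln1 mulnA (expnS D 3) leq_mul2r D_ge16 orbT.
have [s avoid] := lovasz_local_lemma ord0 (@uncaptured_local)
  (fun p => card_uncaptured_le p colours hk) card_neighbours_le b_gt0 d_gt0 abd.
exists s => y x cut; move: (avoid (y, x)); rewrite /uncaptured inE /= cut negb_forall.
by case/existsP=> i /negPn; exists i.
Qed.

End Layers.
End CutEdges.

Lemma ln_bound_gt0 (D k : nat) : 1 < D -> (27 * INR D * ln (INR D) <= INR k)%R -> 0 < k.
Proof.
move=> D_gt1 hk; have D_gt1R : (1 < INR D)%R by apply: (lt_INR 1); apply/ltP.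
have ln_gt0 : (0 < ln (INR D))%R by rewrite -ln_1; apply: ln_increasing; lra.
have : (0 < 27 * INR D * ln (INR D))%R by apply: Rmult_lt_0_compat => //; lra.
by move=> pos; apply/ltP; apply: INR_lt; rewrite [INR 0]/=; lra.
Qed.

Unset Implicit Arguments.

Theorem theorem3p2 (D k : nat) (T : finType) (adj : rel T) (Y : {set T}) :
  41 <= D ->
  (* k = ceiling (27 * D * ln D) *)
  (INR k - 1 < 27 * INR D * ln (INR D) <= INR k)%R ->
  simple_graph adj ->
  max_degree adj = D ->
  independent adj Y ->
  exists c : {set T} -> 'I_k,
    forall i : 'I_k,
      good adj (fun f => cut_edge adj Y f /\ c f = i).
Proof.
move=> D_ge41 [_ hk] [adj_sym _] max_deg Y_indep.
have nbhd_le v : #|nbhd adj v| <= D.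
  by rewrite -max_deg; exact: (@leq_bigmax T (degree adj) v).
have colours : (2 * D).-1.+1 = 2 * D by rewrite prednK //; lia.
have [s capture] := exists_capturing_sample Y adj_sym nbhd_le
  (leq_trans (isT : 16 <= 41) D_ge41) colours hk.
have i0 : 'I_k := Ordinal (ln_bound_gt0 (leq_trans (isT : 1 < 41) D_ge41) hk).
pose captures f i := [exists p : T * T,
  [&& f == [set p.1; p.2], cutb adj Y p.1 p.2 & captured adj Y s i p.1 p.2]].
exists (fun f => odflt i0 [pick i | captures f i]) => i.
apply: good_sub (@captured_class_good _ _ _ adj_sym Y_indep _ _ s i).
move=> _ [[y [x [yx yY xY ->]]] <-].
have cut : cutb adj Y y x by apply/and3P.
case: pickP => [j /existsP[[y' x'] /and3P[/eqP f_eq cut' cap]] | none] /=.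
  by exists y', x'.
have [j cap] := capture y x cut.
by have := none j; rewrite /captures; move/existsP; case; exists (y, x); rewrite eqxx cut cap.
Qed.
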